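(* Let $V$ be a vector space of dimension $2r$ ($r\ge1$) over $\mathbb{F}_2$ with nondegenerate quadratic form $Q$. (i) If $Q$ is hyperbolic and $r\equiv 0$ or $1\pmod 4$, then $V$ has a symmetric basis. (ii) If $Q$ is elliptic and $r\equiv 2$ or $3\pmod 4$, then $V$ has a symmetric basis.
   Context: The associated bilinear form of $Q$ is $B(u,v)=Q(u+v)-Q(u)-Q(v)$, and $Q$ is nondegenerate if $B$ is. $Q$ on a $2r$-dimensional space is hyperbolic if $V$ has a basis $e_1,\dots,e_r,f_1,\dots,f_r$ with $Q(e_i)=Q(f_i)=0$, $B(e_i,e_j)=B(f_i,f_j)=0$, $B(e_i,f_j)=\delta_{ij}$; it is elliptic if $V$ has a basis $e_1,\dots,e_{r-1},f_1,\dots,f_{r-1},x,y$ with the same relations among the $e_i,f_i$, all $e_i,f_i$ orthogonal to $x,y$, $Q(x)=1$, $B(x,y)=1$, $Q(y)=\zeta$ where $X^2+X+\zeta$ is irreducible over $\mathbb{F}_2$ (i.e. $\zeta=1$). A basis $\{v_1,\dots,v_{2r}\}$ is symmetric if $Q(v_i)=0$ for all $i$ and $B(v_i,v_j)=1$ for all $i\neq j$. *)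

From HB Require Import structures.
From mathcomp Require Import all_boot all_order all_algebra.
Set Implicit Arguments. Unset Strict Implicit. Unset Printing Implicit Defensive.
Import GRing.Theory.
Local Open Scope ring_scope.

Section QF.
Variable V : vectType 'F_2.

Definition polar (Q : V -> 'F_2) (u v : V) : 'F_2 := Q (u + v) - Q u - Q v.

Definition is_quadratic_form (Q : V -> 'F_2) : Prop :=
  [/\ forall (a : 'F_2) (v : V), Q (a *: v) = a ^+ 2 * Q v,
      forall u w v : V, polar Q (u + w) v = polar Q u v + polar Q w v,
      forall (a : 'F_2) (u v : V), polar Q (a *: u) v = a * polar Q u v,
      forall u v w : V, polar Q u (v + w) = polar Q u v + polar Q u w
    & forall (a : 'F_2) (u v : V), polar Q u (a *: v) = a * polar Q u v].

Definition nondegenerate_qf (Q : V -> 'F_2) : Prop :=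
  forall u : V, (forall v : V, polar Q u v = 0) -> u = 0.

Definition hyperbolic_qf (r : nat) (Q : V -> 'F_2) : Prop :=
  exists e f : 'I_r -> V,
    [/\ basis_of fullv ([seq e i | i <- enum 'I_r] ++ [seq f i | i <- enum 'I_r]),
        forall i, Q (e i) = 0 /\ Q (f i) = 0,
        forall i j, polar Q (e i) (e j) = 0 /\ polar Q (f i) (f j) = 0
      & forall i j, polar Q (e i) (f j) = (i == j)%:R].

(* elliptic on a 2r-dimensional space (zeta = 1 over F_2) *)
Definition elliptic_qf (r : nat) (Q : V -> 'F_2) : Prop :=
  exists (e f : 'I_r.-1 -> V) (x y : V),
    [/\ basis_of fullv ([seq e i | i <- enum 'I_r.-1] ++
                        [seq f i | i <- enum 'I_r.-1] ++ [:: x; y]),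
        forall i, Q (e i) = 0 /\ Q (f i) = 0,
        forall i j, polar Q (e i) (e j) = 0 /\ polar Q (f i) (f j) = 0,
        forall i j, polar Q (e i) (f j) = (i == j)%:R
      & forall i, [/\ polar Q (e i) x = 0, polar Q (e i) y = 0,
                      polar Q (f i) x = 0 & polar Q (f i) y = 0]] /\
    [/\ Q x = 1, polar Q x y = 1 & Q y = 1].

Definition has_symmetric_basis (n : nat) (Q : V -> 'F_2) : Prop :=
  exists v : 'I_n -> V,
    [/\ basis_of fullv [seq v i | i <- enum 'I_n],
        forall i, Q (v i) = 0
      & forall i j, i != j -> polar Q (v i) (v j) = 1].

End QF.

From HB Require Import structures.
From mathcomp Require Import all_boot all_order all_algebra zify ring.
Import GRing.Theory.
Local Open Scope ring_scope.
Set Implicit Arguments. Unset Strict Implicit. Unset Printing Implicit Defensive.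

(* Over F_2 it suffices to find 2r vectors with Q(v_i) = 0 and B(v_i, v_j) = 1
   for i <> j: their Gram matrix J - I is invertible because 2r is even, so
   they form a basis.  Such vectors are
   v_(2a) = x_a + S_a and v_(2a+1) = y_a + S_a with S_a = sum_(j<a) (x_j + y_j),
   built from r mutually orthogonal pairs (x_k, y_k) with B(x_k, y_k) = 1 and
   Q(x_k) = Q(y_k) = k mod 2.  These pairs come from the standard hyperbolic or
   elliptic basis by merging hyperbolic planes two at a time into two planes
   on which Q is 1; the congruence on r says exactly that the odd positions not
   taken by the anisotropic plane can be grouped in twos. *)

Lemma pchar2_F2 : 2 \in [pchar 'F_2]. Proof. exact: pchar_Fp. Qed.

Lemma natrF2 k : k%:R = (k %% 2 == 1)%N%:R :> 'F_2.
Proof. by rewrite -Fp_nat_mod // modn2; case: odd. Qed.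

Section QuadraticForm.
Variables (V : vectType 'F_2) (Q : V -> 'F_2).
Hypothesis HQ : is_quadratic_form Q.

Lemma quad0 : Q 0 = 0.
Proof. by case: HQ => QZ _ _ _ _; rewrite -(scale0r 0) QZ expr0n mul0r. Qed.

Lemma quadD u v : Q (u + v) = Q u + Q v + polar Q u v.
Proof. rewrite /polar; ring. Qed.

Lemma polarC u v : polar Q u v = polar Q v u.
Proof. rewrite /polar (addrC u v); ring. Qed.

Lemma polarDl u w v : polar Q (u + w) v = polar Q u v + polar Q w v.
Proof. by case: HQ. Qed.

Lemma polarDr u v w : polar Q u (v + w) = polar Q u v + polar Q u w.
Proof. by case: HQ. Qed.

Lemma polarZl a u v : polar Q (a *: u) v = a * polar Q u v.
Proof. by case: HQ. Qed.

Lemma polar0l v : polar Q 0 v = 0.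
Proof. by rewrite -(scale0r 0) polarZl mul0r. Qed.

Lemma polarxx u : polar Q u u = 0.
Proof.
have uu0 : u + u = 0 by rewrite -mulr2n -scaler_nat (pchar_Fp_0 (isT : prime 2)) scale0r.
by rewrite /polar uu0 quad0 sub0r -opprD addrr_pchar2 ?oppr0 // pchar2_F2.
Qed.

Lemma polar_suml (I : Type) (s : seq I) (P : pred I) (F : I -> V) v :
  polar Q (\sum_(i <- s | P i) F i) v = \sum_(i <- s | P i) polar Q (F i) v.
Proof. by apply: (big_morph (polar Q ^~ v)); [move=> u w; exact: polarDl | exact: polar0l]. Qed.

Definition symplectic_pairs (r : nat) (x y : nat -> V) : Prop :=
  forall k l, (k < r)%N -> (l < r)%N ->
  [/\ polar Q (x k) (x l) = 0, polar Q (y k) (y l) = 0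
    & polar Q (x k) (y l) = (k == l)%:R].

Section SymmetricFamily.
Variables (r : nat) (x y : nat -> V).
Hypothesis Hxy : symplectic_pairs r x y.
Hypothesis Qxy : forall k, (k < r)%N -> Q (x k) = k%:R /\ Q (y k) = k%:R.

Definition pair_sum (k : nat) : V := \sum_(j < k) (x j + y j).

Definition symmetric_vector (i : nat) : V :=
  (if odd i then y else x) i./2 + pair_sum i./2.

Lemma polar_pairs (c c' : bool) a b : (a < r)%N -> (b < r)%N ->
  polar Q ((if c then y else x) a) ((if c' then y else x) b) = ((a == b) && (c != c'))%:R.
Proof.
move=> ar br; have [xx yy xy] := Hxy ar br; have [_ _ yx] := Hxy br ar.
case: c; case: c' => /=; rewrite ?polarxx ?xx ?yy ?xy ?andbF ?andbT //.
by rewrite polarC yx eq_sym.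
Qed.

Lemma polar_pair_sum1 c a b : (a < r)%N -> (b < r)%N ->
  polar Q ((if c then y else x) a) (x b + y b) = (a == b)%:R.
Proof.
move=> ar br; rewrite polarDr.
rewrite (polar_pairs c false ar br) (polar_pairs c true ar br).
by case: (a == b); case: c; rewrite /= ?addr0 ?add0r.
Qed.

Lemma polar_pair_sum c a k : (a < r)%N -> (k <= r)%N ->
  polar Q ((if c then y else x) a) (pair_sum k) = (a < k)%:R.
Proof.
move=> ar; elim: k => [|k IHk] kr; first by rewrite /pair_sum big_ord0 polarC polar0l.
rewrite /pair_sum big_ord_recr polarDr -/(pair_sum k) IHk ?(ltnW kr) // polar_pair_sum1 //.
rewrite [in RHS]ltnS [in RHS]leq_eqVlt /=.
by case: (eqVneq a k) => [->|_]; rewrite ?ltnn ?add0r ?addr0.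
Qed.

Lemma polar_pair_sums k l : (k <= r)%N -> (l <= r)%N ->
  polar Q (pair_sum k) (pair_sum l) = 0.
Proof.
move=> kr lr; rewrite polar_suml big1 // => a _.
have ar : (a < r)%N := leq_trans (ltn_ord a) kr.
by rewrite polarDl (polar_pair_sum false ar lr) (polar_pair_sum true ar lr) addrr_pchar2 ?pchar2_F2.
Qed.

Lemma quad_pair_sum k : (k <= r)%N -> Q (pair_sum k) = k%:R.
Proof.
elim: k => [|k IHk] kr; first by rewrite /pair_sum big_ord0 quad0.
have [Qx Qy] := Qxy kr; have [_ _ xy] := Hxy kr kr.
rewrite /pair_sum big_ord_recr quadD -/(pair_sum k) IHk ?(ltnW kr) //.
rewrite polarC polarDl (polar_pair_sum false kr (ltnW kr)) (polar_pair_sum true kr (ltnW kr)).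
by rewrite quadD Qx Qy xy eqxx ltnn addrr_pchar2 ?pchar2_F2 // !add0r addr0 -mulrSr.
Qed.

Lemma quad_symmetric_vector i : (i < 2 * r)%N -> Q (symmetric_vector i) = 0.
Proof.
rewrite mul2n -ltn_half_double => ir.
rewrite /symmetric_vector quadD (polar_pair_sum _ ir (ltnW ir)) ltnn addr0.
rewrite quad_pair_sum ?(ltnW ir) //; have [Qx Qy] := Qxy ir.
by case: odd; rewrite ?Qx ?Qy addrr_pchar2 ?pchar2_F2.
Qed.

Lemma polar_symmetric_vectors i j : (i < 2 * r)%N -> (j < 2 * r)%N -> i != j ->
  polar Q (symmetric_vector i) (symmetric_vector j) = 1.
Proof.
rewrite !mul2n -!ltn_half_double => ir jr ij.
rewrite /symmetric_vector !polarDl !polarDr (polar_pairs _ _ ir jr).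
rewrite (polar_pair_sum _ ir (ltnW jr)) polarC (polar_pair_sum _ jr (ltnW ir)).
rewrite (polar_pair_sums (ltnW ir) (ltnW jr)) addr0.
case: (ltngtP i./2 j./2) => [||half_ij] /=; rewrite ?add0r ?addr0 //.
suff -> : odd i != odd j by [].
apply: contra ij => /eqP odd_ij.
by rewrite -[i]odd_double_half -[j]odd_double_half odd_ij half_ij.
Qed.

End SymmetricFamily.

Lemma basis_of_polar_one n (v : 'I_n -> V) :
  ~~ odd n -> \dim (fullv : {vspace V}) = n ->
  (forall i j, i != j -> polar Q (v i) (v j) = 1) ->
  basis_of fullv [seq v i | i <- enum 'I_n].
Proof.
move=> even_n dimV polar1.
rewrite basisEfree subvf size_map size_enum_ord dimV leqnn !andbT.
have -> : [seq v i | i <- enum 'I_n] = mktuple v by [].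
apply/freeP => k sum_kv0.
(* Pairing the relation with v_j shows that every coefficient equals their sum. *)
pose K := \sum_(i < n) k i.
have kK j : k j = K.
  have := congr1 (polar Q ^~ (v j)) sum_kv0; rewrite /= polar_suml polar0l (bigD1 j) //=.
  rewrite nth_mktuple polarZl polarxx mulr0 add0r => sum_k0.
  rewrite (eq_bigr k) in sum_k0 => [|i ij]; last by rewrite nth_mktuple polarZl polar1 ?mulr1.
  by rewrite /K (bigD1 j) //= sum_k0 addr0.
have K0 : K = 0.
  rewrite {1}/K (eq_bigr (fun=> K)) // sumr_const card_ord.
  have -> : n = (n./2 * 2)%N by rewrite muln2 -[LHS]odd_double_half (negbTE even_n).
  by rewrite mulrnA mulr2n addrr_pchar2 ?pchar2_F2.
by move=> i; rewrite kK K0.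
Qed.

(* [s] is the position of the anisotropic plane ([s = r]: there is none); the
   other odd positions then group as (4m+1, 4m+3). *)
Definition regroupable (r s : nat) : Prop :=
  ((r %% 4 <= 1 /\ s = r) \/ (r %% 4 = 2 /\ s + 1 = r) \/ (r %% 4 = 3 /\ s + 2 = r))%N.

Ltac decide_index_eqs :=
  first [ by apply/eqP | (exfalso; lia) |
          match goal with |- context [(?a == ?b)%N] => case: (a =P b) => ?; decide_index_eqs end ].

Section Regrouping.
Variables (r s : nat) (p q : nat -> V).
Hypothesis rs : regroupable r s.
Hypothesis Hpq : symplectic_pairs r p q.
Hypothesis Qpq : forall k, (k < r)%N -> Q (p k) = (k == s)%:R /\ Q (q k) = (k == s)%:R.

(* Orthogonal hyperbolic pairs (p, q), (p', q') at positions 4m+1 and 4m+3 are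
   replaced by (p + q, p + p' + q') and (p + q + p', p + q + q'). *)
Definition regrouped_x (k : nat) : V :=
  if ((k %% 2 == 0) || (k == s))%N then p k
  else if (k %% 4 == 1)%N then p k + q k
  else p (k - 2)%N + q (k - 2)%N + p k.

Definition regrouped_y (k : nat) : V :=
  if ((k %% 2 == 0) || (k == s))%N then q k
  else if (k %% 4 == 1)%N then p k + p (k + 2)%N + q (k + 2)%N
  else p (k - 2)%N + q (k - 2)%N + q k.

Let pp j k : (j < r)%N -> (k < r)%N -> polar Q (p j) (p k) = 0.
Proof. by move=> jr kr; case: (Hpq jr kr). Qed.

Let qq j k : (j < r)%N -> (k < r)%N -> polar Q (q j) (q k) = 0.
Proof. by move=> jr kr; case: (Hpq jr kr). Qed.

Let pq j k : (j < r)%N -> (k < r)%N -> polar Q (p j) (q k) = (j == k)%:R.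
Proof. by move=> jr kr; case: (Hpq jr kr). Qed.

Let qp j k : (j < r)%N -> (k < r)%N -> polar Q (q j) (p k) = (j == k)%:R.
Proof. by move=> jr kr; rewrite polarC pq // eq_sym. Qed.

Let Qp j : (j < r)%N -> Q (p j) = (j == s)%:R.
Proof. by case/Qpq. Qed.

Let Qq j : (j < r)%N -> Q (q j) = (j == s)%:R.
Proof. by case/Qpq. Qed.

Lemma regrouped_symplectic : symplectic_pairs r regrouped_x regrouped_y.
Proof.
move: rs; rewrite /regroupable => rs' k l kr lr; rewrite /regrouped_x /regrouped_y; split;
  repeat case: ifP => ?; try (exfalso; lia);
  rewrite ?polarDl ?polarDr ?pp ?qq ?pq ?qp; try lia; decide_index_eqs.
Qed.

Lemma quad_regrouped k : (k < r)%N -> Q (regrouped_x k) = k%:R /\ Q (regrouped_y k) = k%:R.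
Proof.
move: rs; rewrite /regroupable => rs' kr; rewrite natrF2 /regrouped_x /regrouped_y; split;
  repeat case: ifP => ?; try (exfalso; lia);
  rewrite ?quadD ?polarDl ?polarDr ?pp ?qq ?pq ?qp ?Qp ?Qq; try lia; decide_index_eqs.
Qed.

End Regrouping.

Lemma symmetric_basis_of_pairs r s p q :
  \dim (fullv : {vspace V}) = (2 * r)%N -> regroupable r s ->
  symplectic_pairs r p q ->
  (forall k, (k < r)%N -> Q (p k) = (k == s)%:R /\ Q (q k) = (k == s)%:R) ->
  has_symmetric_basis (2 * r) Q.
Proof.
move=> dimV rs Hpq Qpq.
have Hxy := regrouped_symplectic rs Hpq.
have Qxy := quad_regrouped rs Hpq Qpq.
pose v (i : 'I_(2 * r)) := symmetric_vector (regrouped_x s p q) (regrouped_y s p q) i.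
have polar_v (i j : 'I_(2 * r)) : i != j -> polar Q (v i) (v j) = 1.
  by move=> ij; exact: (polar_symmetric_vectors Hxy (ltn_ord i) (ltn_ord j) ij).
exists v; split => [|i|//].
- by apply: (basis_of_polar_one _ dimV polar_v); rewrite oddM.
- exact: (quad_symmetric_vector Hxy Qxy (ltn_ord i)).
Qed.

Definition extend_nat n (g : 'I_n -> V) (j : nat) : V := oapp g 0 (insub j).

Lemma extend_natE n (g : 'I_n -> V) j (jn : (j < n)%N) : extend_nat g j = g (Ordinal jn).
Proof. by rewrite /extend_nat insubT. Qed.

Lemma hyperbolic_symplectic_pairs r : hyperbolic_qf r Q ->
  exists p q, symplectic_pairs r p q /\
    forall k, (k < r)%N -> Q (p k) = 0 /\ Q (q k) = 0.
Proof.
case=> e [f [_ Qef polar_ee polar_ef]].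
exists (extend_nat e), (extend_nat f); split => [k l kr lr|k kr]; rewrite !extend_natE //.
by have [-> ->] := polar_ee (Ordinal kr) (Ordinal lr); rewrite polar_ef.
Qed.

Lemma elliptic_symplectic_pairs r s : (s < r)%N -> elliptic_qf r Q ->
  exists p q, symplectic_pairs r p q /\
    forall k, (k < r)%N -> Q (p k) = (k == s)%:R /\ Q (q k) = (k == s)%:R.
Proof.
move=> sr [e [f [x [y [[_ Qef polar_ee polar_ef polar_efxy] [Qx Bxy Qy]]]]]].
have unbump_lt j : (j < r)%N -> j != s -> (unbump s j < r.-1)%N.
  by rewrite /unbump => jr /eqP js; case: ltnP => sj /=; lia.
have unbump_eq j k : j != s -> k != s -> (unbump s j == unbump s k) = (j == k).
  by move=> js ks; apply/eqP/eqP => [/(congr1 (bump s))|->]; rewrite ?(unbumpK js) ?(unbumpK ks).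
pose i k kr ks : 'I_r.-1 := Ordinal (unbump_lt k kr ks).
have extE g k kr ks : extend_nat g (unbump s k) = g (i k kr ks) := extend_natE _ _.
pose p j := if j == s then x else extend_nat e (unbump s j).
pose q j := if j == s then y else extend_nat f (unbump s j).
exists p, q; split => [k l kr lr|k kr]; rewrite /p /q; last first.
  by case: eqVneq => [_|ks]; rewrite ?Qx ?Qy // !extE; apply: Qef.
case: (eqVneq k s) => ks; case: (eqVneq l s) => ls; rewrite ?ks ?ls ?eqxx ?polarxx.
- by rewrite Bxy.
- have [ex ey fx fy] := polar_efxy (i l lr ls).
  by rewrite !extE polarC ex polarC fy polarC fx eq_sym (negbTE ls).
- have [ex ey fx fy] := polar_efxy (i k kr ks).
  by rewrite !extE ex fy ey (negbTE ks).
- rewrite !extE; have [-> ->] := polar_ee (i k kr ks) (i l lr ls).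
  by rewrite polar_ef -(unbump_eq k l ks ls).
Qed.

End QuadraticForm.

Unset Implicit Arguments.

Theorem lemma3p3 (r : nat) (V : vectType 'F_2) (Q : V -> 'F_2) :
  (1 <= r)%N -> \dim (fullv : {vspace V}) = (2 * r)%N ->
  is_quadratic_form Q -> nondegenerate_qf Q ->
  (hyperbolic_qf r Q -> (r %% 4 = 0 \/ r %% 4 = 1)%N -> has_symmetric_basis (2 * r) Q) /\
  (elliptic_qf r Q -> (r %% 4 = 2 \/ r %% 4 = 3)%N -> has_symmetric_basis (2 * r) Q).
Proof.
move=> _ dimV HQ _; split => [hyp r_mod4 | ell r_mod4].
- have [p [q [Hpq Qpq]]] := hyperbolic_symplectic_pairs hyp.
  apply: (symmetric_basis_of_pairs HQ (s := r) dimV _ Hpq) => [|k kr].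
    by rewrite /regroupable; lia.
  by rewrite ltn_eqF //; exact: Qpq.
- pose s := if (r %% 4 == 2)%N then r.-1 else r.-2.
  have s_lt_r : (s < r)%N by rewrite /s; case: ifP; lia.
  have [p [q [Hpq Qpq]]] := elliptic_symplectic_pairs HQ s_lt_r ell.
  apply: (symmetric_basis_of_pairs HQ dimV _ Hpq Qpq).
  by rewrite /regroupable /s; case: ifP; lia.
Qed.
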